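(* For $i=1,2$ let $\alpha_i\in[-1,1]$ and let $f_{\alpha_i}=h_{\alpha_i}+\overline{g_{\alpha_i}}\in S_H$ with $h_{\alpha_i}(z)+g_{\alpha_i}(z)=\dfrac{z(1-\alpha_i z)}{1-z^2}$ (the two maps may have different dilatations). If $\alpha_1=\alpha_2$, then for every $0\le t\le1$ the map $f=tf_{\alpha_1}+(1-t)f_{\alpha_2}$ belongs to $S_H$ and maps $E$ onto a domain convex in the direction of the imaginary axis.
   Context: $E=\{z\in\mathbb{C}:|z|<1\}$. A harmonic mapping $f=h+\overline{g}$ on $E$ (with $h,g$ analytic) is locally univalent and sense-preserving iff $h'\neq0$ in $E$ and its dilatation $\omega=g'/h'$ satisfies $|\omega|<1$ in $E$. $S_H$ denotes the class of harmonic, univalent, sense-preserving mappings $f=h+\overline{g}$ of $E$ normalized by $f(0)=0$, $f_z(0)=1$. A domain $\Omega$ is convex in the direction of the imaginary axis if every line parallel to the imaginary axis has connected or empty intersection with $\Omega$. *)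

From Stdlib Require Import Reals Lra.
Open Scope R_scope.

Definition Cx : Type := (R * R)%type.

Definition RtoC (x : R) : Cx := (x, 0).
Definition Cre (z : Cx) : R := fst z.
Definition Cim (z : Cx) : R := snd z.
Definition Cadd (z w : Cx) : Cx := (fst z + fst w, snd z + snd w).
Definition Copp (z : Cx) : Cx := (- fst z, - snd z).
Definition Csub (z w : Cx) : Cx := Cadd z (Copp w).
Definition Cmul (z w : Cx) : Cx :=
  (fst z * fst w - snd z * snd w, fst z * snd w + snd z * fst w).
Definition Cconj (z : Cx) : Cx := (fst z, - snd z).
Definition Cinv (z : Cx) : Cx :=
  (fst z / (fst z ^ 2 + snd z ^ 2), - snd z / (fst z ^ 2 + snd z ^ 2)).
Definition Cdiv (z w : Cx) : Cx := Cmul z (Cinv w).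
Definition Cabs (z : Cx) : R := sqrt (fst z ^ 2 + snd z ^ 2).
Definition C0 : Cx := (0, 0).
Definition C1 : Cx := (1, 0).

Definition inE (z : Cx) : Prop := Cabs z < 1.

Definition has_cderiv (f : Cx -> Cx) (z d : Cx) : Prop :=
  forall eps : R, 0 < eps -> exists delta : R, 0 < delta /\
    forall w : Cx, Cabs (Csub w z) < delta ->
      Cabs (Csub (Csub (f w) (f z)) (Cmul d (Csub w z))) <= eps * Cabs (Csub w z).

Definition harm (h g : Cx -> Cx) (z : Cx) : Cx := Cadd (h z) (Cconj (g z)).

(* f = h + conj g belongs to S_H: h, g analytic in E, f locally univalent and
   sense-preserving (h' <> 0 and |g'/h'| < 1 in E), univalent in E,
   f(0) = 0 and f_z(0) = h'(0) = 1. *)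
Definition in_SH (h g : Cx -> Cx) : Prop :=
  exists h' g' : Cx -> Cx,
    (forall z, inE z -> has_cderiv h z (h' z) /\ has_cderiv g z (g' z)) /\
    (forall z, inE z -> h' z <> C0 /\ Cabs (Cdiv (g' z) (h' z)) < 1) /\
    (forall z w, inE z -> inE w -> harm h g z = harm h g w -> z = w) /\
    harm h g C0 = C0 /\
    h' C0 = C1.

Definition imageE (F : Cx -> Cx) (p : Cx) : Prop := exists z, inE z /\ F z = p.

Definition convex_imag (Omega : Cx -> Prop) : Prop :=
  forall x y1 y2 y : R, y1 <= y <= y2 ->
    Omega (x, y1) -> Omega (x, y2) -> Omega (x, y).

Definition cmix (t : R) (u v : Cx -> Cx) (z : Cx) : Cx :=
  Cadd (Cmul (RtoC t) (u z)) (Cmul (RtoC (1 - t)) (v z)).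

Definition shear_sum (a : R) (z : Cx) : Cx :=
  Cdiv (Cmul z (Csub C1 (Cmul (RtoC a) z))) (Csub C1 (Cmul z z)).

(* Write f_i = h_i + conj g_i with h_i + g_i = phi_a, where
   phi_a(z) = z (1 - a z) / (1 - z^2), and f = t f_1 + (1 - t) f_2 = h + conj g.

   1. Mixing.  h + g = phi_a again, and h_1' + g_1' = h_2' + g_2' = S on E.  The
      condition |g_i'| < |h_i'| reads |S - h_i'| < |h_i'|, i.e. h_i' lies in an open
      half-plane, so it survives the convex combination h' = t h_1' + (1 - t) h_2'.
   2. Shearing.  Any h, g holomorphic on E with |g'| < |h'| and h + g = phi_a give
      a univalent f with image convex in the direction of the imaginary axis.
      phi_a is inverted explicitly, z = 2 w / (1 + sqrt(1 + 4 w (w - a))); along a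
      vertical line Re w = x the admissible y = Im w form an interval, and
      y |-> Im f = Im (h - g) has derivative Re((h' - g')/(h' + g')) > 0 there.
      Monotonicity gives univalence, the intermediate value theorem convexity. *)
From Stdlib Require Import Reals Lra Psatz.
From Coquelicot Require Import Coquelicot.
From Pilot Require Import Defs.
Open Scope R_scope.

Lemma Cx_eq (z w : Cx) : fst z = fst w -> snd z = snd w -> z = w.
Proof. destruct z, w; simpl; intros; subst; reflexivity. Qed.

(* The complex operations of Defs coincide with Coquelicot's, so its field
   structure and its lemmas on the modulus apply verbatim. *)
Lemma Cx_field : field_theory C0 C1 Cadd Cmul Csub Copp Cdiv Cinv (@eq Cx).
Proof. exact C_field_theory. Qed.

Add Field Cx_field_inst : Cx_field.

Lemma Cx_sub_eq0 z w : Csub z w = C0 -> z = w.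
Proof. intro H. replace z with (Cadd (Csub z w) w) by ring. rewrite H. ring. Qed.

Lemma Cabs_ge0 z : 0 <= Cabs z.
Proof. exact (Cmod_ge_0 z). Qed.

Lemma Cabs_pos z : z <> C0 -> 0 < Cabs z.
Proof. exact (proj1 (Cmod_gt_0 z)). Qed.

Lemma Cabs_mul z w : Cabs (Cmul z w) = Cabs z * Cabs w.
Proof. exact (Cmod_mult z w). Qed.

Lemma Cabs_div z w : w <> C0 -> Cabs (Cdiv z w) = Cabs z / Cabs w.
Proof. exact (Cmod_div z w). Qed.

Lemma Cabs_triangle z w : Cabs (Cadd z w) <= Cabs z + Cabs w.
Proof. exact (Cmod_triangle z w). Qed.

Lemma Cabs_opp z : Cabs (Copp z) = Cabs z.
Proof. exact (Cmod_opp z). Qed.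

Lemma Cabs_C0 : Cabs C0 = 0.
Proof. exact Cmod_0. Qed.

Lemma Cabs_RtoC r : Cabs (RtoC r) = Rabs r.
Proof. exact (Cmod_R r). Qed.

Lemma Cabs_imag r : Cabs (0, r) = Rabs r.
Proof. unfold Cabs; simpl. rewrite <- sqrt_Rsqr_abs. f_equal. unfold Rsqr; ring. Qed.

Lemma Cabs_sq z : Cabs z ^ 2 = fst z ^ 2 + snd z ^ 2.
Proof. unfold Cabs; apply pow2_sqrt; nra. Qed.

Lemma Cabs_lt_iff z w : Cabs z < Cabs w <-> fst z ^ 2 + snd z ^ 2 < fst w ^ 2 + snd w ^ 2.
Proof.
  split; intro H.
  - rewrite <- !Cabs_sq. pose proof (Cabs_ge0 z). nra.
  - apply sqrt_lt_1_alt; split; [nra | exact H].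
Qed.

Lemma Cabs_ge_fst z : Rabs (fst z) <= Cabs z.
Proof. exact (re_le_Cmod z). Qed.

Lemma Cabs_ge_snd z : Rabs (snd z) <= Cabs z.
Proof. eapply Rle_trans; [apply Rmax_r | exact (Rmax_Cmod z)]. Qed.

Lemma Cabs_le_coords z : Cabs z <= Rabs (fst z) + Rabs (snd z).
Proof.
  pose proof (Rabs_pos (fst z)). pose proof (Rabs_pos (snd z)).
  rewrite <- (sqrt_pow2 (Rabs (fst z) + Rabs (snd z))) by lra.
  apply sqrt_le_1_alt. rewrite <- (pow2_abs (fst z)), <- (pow2_abs (snd z)). nra.
Qed.

Lemma inE_iff z : inE z <-> fst z ^ 2 + snd z ^ 2 < 1.
Proof.
  unfold inE. replace 1 with (Cabs C1) at 1 by exact Cmod_1.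
  rewrite Cabs_lt_iff. unfold C1; simpl. split; intro H; lra.
Qed.

Lemma inE_open z w : Cabs (Csub w z) < 1 - Cabs z -> inE w.
Proof.
  intro H. unfold inE. replace w with (Cadd z (Csub w z)) by ring.
  eapply Rle_lt_trans; [apply Cabs_triangle | lra].
Qed.

Lemma cderiv_add f g z d e :
  has_cderiv f z d -> has_cderiv g z e ->
  has_cderiv (fun w => Cadd (f w) (g w)) z (Cadd d e).
Proof.
  intros Hf Hg eps Heps.
  destruct (Hf (eps / 2)) as [d1 [Hd1 H1]]; [lra|].
  destruct (Hg (eps / 2)) as [d2 [Hd2 H2]]; [lra|].
  exists (Rmin d1 d2); split; [apply Rmin_glb_lt; assumption|].
  intros w Hw.
  specialize (H1 w (Rlt_le_trans _ _ _ Hw (Rmin_l _ _))).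
  specialize (H2 w (Rlt_le_trans _ _ _ Hw (Rmin_r _ _))).
  replace (Csub (Csub (Cadd (f w) (g w)) (Cadd (f z) (g z))) (Cmul (Cadd d e) (Csub w z)))
    with (Cadd (Csub (Csub (f w) (f z)) (Cmul d (Csub w z)))
               (Csub (Csub (g w) (g z)) (Cmul e (Csub w z)))) by ring.
  eapply Rle_trans; [apply Cabs_triangle | lra].
Qed.

Lemma cderiv_scal t f z d :
  has_cderiv f z d -> has_cderiv (fun w => Cmul (RtoC t) (f w)) z (Cmul (RtoC t) d).
Proof.
  intros Hf eps Heps.
  assert (Ht : 0 < Rabs t + 1) by (pose proof (Rabs_pos t); lra).
  destruct (Hf (eps / (Rabs t + 1))) as [d1 [Hd1 H1]]; [apply Rdiv_lt_0_compat; lra|].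
  exists d1; split; [exact Hd1|]. intros w Hw. specialize (H1 w Hw).
  replace (Csub (Csub (Cmul (RtoC t) (f w)) (Cmul (RtoC t) (f z)))
                (Cmul (Cmul (RtoC t) d) (Csub w z)))
    with (Cmul (RtoC t) (Csub (Csub (f w) (f z)) (Cmul d (Csub w z)))) by ring.
  rewrite Cabs_mul, Cabs_RtoC.
  pose proof (Cabs_ge0 (Csub w z)).
  assert (Hle : Rabs t * (eps / (Rabs t + 1)) <= eps).
  { apply (Rmult_le_reg_r (Rabs t + 1)); [lra|]. field_simplify; lra. }
  apply Rle_trans with (Rabs t * (eps / (Rabs t + 1) * Cabs (Csub w z))).
  - apply Rmult_le_compat_l; [apply Rabs_pos | exact H1].
  - nra.
Qed.

Lemma cderiv_opp f z d :
  has_cderiv f z d -> has_cderiv (fun w => Copp (f w)) z (Copp d).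
Proof.
  intros Hf eps Heps. destruct (Hf eps Heps) as [d1 [Hd1 H1]].
  exists d1; split; [exact Hd1|]. intros w Hw.
  replace (Csub (Csub (Copp (f w)) (Copp (f z))) (Cmul (Copp d) (Csub w z)))
    with (Copp (Csub (Csub (f w) (f z)) (Cmul d (Csub w z)))) by ring.
  rewrite Cabs_opp. exact (H1 w Hw).
Qed.

Lemma cderiv_local F G z d r :
  0 < r -> (forall w, Cabs (Csub w z) < r -> F w = G w) ->
  has_cderiv F z d -> has_cderiv G z d.
Proof.
  intros Hr Heq HF eps Heps. destruct (HF eps Heps) as [d1 [Hd1 H1]].
  exists (Rmin d1 r); split; [apply Rmin_glb_lt; assumption|]. intros w Hw.
  assert (Hz : Cabs (Csub z z) < r)
    by (replace (Csub z z) with C0 by ring; rewrite Cabs_C0; exact Hr).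
  rewrite <- (Heq w (Rlt_le_trans _ _ _ Hw (Rmin_r _ _))), <- (Heq z Hz).
  exact (H1 w (Rlt_le_trans _ _ _ Hw (Rmin_l _ _))).
Qed.

(* Uniqueness of the complex derivative: test the two linear approximations
   along a short horizontal increment. *)
Lemma cderiv_unique F z d1 d2 :
  has_cderiv F z d1 -> has_cderiv F z d2 -> d1 = d2.
Proof.
  intros H1 H2.
  assert (Hsmall : forall eps, 0 < eps -> Cabs (Csub d1 d2) <= 2 * eps).
  { intros eps Heps.
    destruct (H1 eps Heps) as [r1 [Hr1 E1]]. destruct (H2 eps Heps) as [r2 [Hr2 E2]].
    set (rho := Rmin r1 r2 / 2).
    assert (Hrho : 0 < rho) by (unfold rho; pose proof (Rmin_glb_lt _ _ _ Hr1 Hr2); lra).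
    set (w := Cadd z (RtoC rho)).
    assert (Hw : Cabs (Csub w z) = rho).
    { unfold w. replace (Csub (Cadd z (RtoC rho)) z) with (RtoC rho) by ring.
      rewrite Cabs_RtoC. apply Rabs_right; lra. }
    assert (Hlt : rho < Rmin r1 r2) by (unfold rho; pose proof (Rmin_glb_lt _ _ _ Hr1 Hr2); lra).
    specialize (E1 w (ltac:(rewrite Hw; eapply Rlt_le_trans; [exact Hlt | apply Rmin_l]))).
    specialize (E2 w (ltac:(rewrite Hw; eapply Rlt_le_trans; [exact Hlt | apply Rmin_r]))).
    assert (Hdiff : Cmul (Csub d1 d2) (Csub w z) =
      Cadd (Csub (Csub (F w) (F z)) (Cmul d2 (Csub w z)))
           (Copp (Csub (Csub (F w) (F z)) (Cmul d1 (Csub w z))))) by ring.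
    pose proof (Cabs_triangle (Csub (Csub (F w) (F z)) (Cmul d2 (Csub w z)))
                              (Copp (Csub (Csub (F w) (F z)) (Cmul d1 (Csub w z))))) as Htri.
    rewrite <- Hdiff, Cabs_opp, Cabs_mul in Htri. rewrite Hw in Htri, E1, E2.
    apply (Rmult_le_reg_r rho); [exact Hrho | lra]. }
  assert (Hzero : Cabs (Csub d1 d2) = 0).
  { destruct (Rle_lt_or_eq_dec _ _ (Cabs_ge0 (Csub d1 d2))) as [Hpos | Heq]; [|auto].
    specialize (Hsmall (Cabs (Csub d1 d2) / 4)). lra. }
  apply Cx_sub_eq0, Cmod_eq_0, Hzero.
Qed.

(* |S - u| < |u| says that u lies in the open half-plane Re(u conj S) > |S|^2/2;
   this condition is linear in u, hence preserved by convex combinations. *)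
Lemma dominated_iff S u :
  Cabs (Csub S u) < Cabs u <-> fst S ^ 2 + snd S ^ 2 < 2 * (fst S * fst u + snd S * snd u).
Proof.
  rewrite Cabs_lt_iff. destruct S as [s1 s2], u as [p q]; simpl.
  split; intro H; nra.
Qed.

Lemma dominated_mix t S u1 u2 : 0 <= t <= 1 ->
  Cabs (Csub S u1) < Cabs u1 -> Cabs (Csub S u2) < Cabs u2 ->
  let u := Cadd (Cmul (RtoC t) u1) (Cmul (RtoC (1 - t)) u2) in Cabs (Csub S u) < Cabs u.
Proof.
  intros Ht H1 H2 u. rewrite dominated_iff in H1, H2 |- *.
  destruct S as [s1 s2], u1 as [p1 q1], u2 as [p2 q2]; unfold u; simpl in *.
  set (m := s1 ^ 2 + s2 ^ 2) in *.
  replace (2 * (s1 * (t * p1 - 0 * q1 + ((1 - t) * p2 - 0 * q2))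
              + s2 * (t * q1 + 0 * p1 + ((1 - t) * q2 + 0 * p2))))
    with (t * (2 * (s1 * p1 + s2 * q1)) + (1 - t) * (2 * (s1 * p2 + s2 * q2))) by ring.
  replace m with (t * m + (1 - t) * m) at 1 by ring.
  destruct (Rle_dec t (1 / 2)); nra.
Qed.

Lemma Cabs_div_lt1_iff hp gp : hp <> C0 -> Cabs (Cdiv gp hp) < 1 <-> Cabs gp < Cabs hp.
Proof.
  intro Hh. pose proof (Cabs_pos hp Hh). rewrite Cabs_div by exact Hh.
  split; intro H'.
  - apply (Rmult_lt_compat_r (Cabs hp)) in H'; [|lra].
    unfold Rdiv in H'. rewrite Rmult_assoc, Rinv_l, Rmult_1_r, Rmult_1_l in H' by lra. exact H'.
  - apply (Rmult_lt_reg_r (Cabs hp)); [lra|]. unfold Rdiv.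
    rewrite Rmult_assoc, Rinv_l, Rmult_1_r, Rmult_1_l by lra. exact H'.
Qed.

Lemma dominated_nonzero hp gp : Cabs gp < Cabs hp -> hp <> C0.
Proof. intros H E. rewrite E, Cabs_C0 in H. pose proof (Cabs_ge0 gp). lra. Qed.

(* The principal square root of D (the root with positive real part when D is
   not a non-positive real). *)
Definition csqrt (D : Cx) : Cx :=
  (sqrt ((Cabs D + fst D) / 2), snd D / (2 * sqrt ((Cabs D + fst D) / 2))).

Lemma csqrt_re_sq D : fst (csqrt D) ^ 2 = (Cabs D + fst D) / 2.
Proof.
  simpl. apply pow2_sqrt.
  pose proof (Cabs_ge_fst D). pose proof (Rle_abs (- fst D)). rewrite Rabs_Ropp in *. lra.
Qed.

Lemma csqrt_sq D : 0 < fst (csqrt D) -> Cmul (csqrt D) (csqrt D) = D.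
Proof.
  intro Hpos. pose proof (csqrt_re_sq D) as Hre. pose proof (Cabs_sq D) as Hmod.
  destruct D as [p q]; cbn [fst snd csqrt] in *. set (r := sqrt ((Cabs (p, q) + p) / 2)) in *.
  apply Cx_eq; unfold Cmul, csqrt; cbn [fst snd]; fold r.
  - apply (Rmult_eq_reg_r (4 * r ^ 2)); [|nra].
    field_simplify; [|lra]. replace (r ^ 4) with ((r ^ 2) ^ 2) by ring. rewrite Hre.
    replace (q ^ 2) with (Cabs (p, q) ^ 2 - p ^ 2) by lra. field.
  - field. lra.
Qed.

Lemma csqrt_unique D u : 0 < fst u -> Cmul u u = D -> csqrt D = u.
Proof.
  intros Hu <-. destruct u as [u1 u2]; cbn [fst] in Hu.
  assert (Hmod : Cabs (Cmul (u1, u2) (u1, u2)) = u1 ^ 2 + u2 ^ 2).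
  { rewrite Cabs_mul. pose proof (Cabs_sq (u1, u2)) as Hsq. cbn [fst snd] in Hsq. nra. }
  assert (Hre : sqrt ((Cabs (Cmul (u1, u2) (u1, u2)) + fst (Cmul (u1, u2) (u1, u2))) / 2) = u1).
  { rewrite Hmod. cbn [fst snd Cmul].
    replace ((u1 ^ 2 + u2 ^ 2 + (u1 * u1 - u2 * u2)) / 2) with (u1 ^ 2) by field.
    apply sqrt_pow2; lra. }
  unfold csqrt. rewrite Hre. apply Cx_eq; cbn [fst snd Cmul]; [reflexivity | field; lra].
Qed.

Lemma one_add_nonzero v : 0 <= fst v -> Cadd C1 v <> C0.
Proof. intros H E. apply (f_equal fst) in E. cbn in E. lra. Qed.

Lemma one_sub_sq_nonzero z : inE z -> Csub C1 (Cmul z z) <> C0.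
Proof.
  intros Hz E. apply inE_iff in Hz. apply (f_equal fst) in E.
  destruct z as [p q]; cbn in E, Hz. nra.
Qed.

(* Inverting w = z (1 - a z) / (1 - z^2): z solves (a - w) z^2 - z + w = 0, whose
   root in the disc is z = 2 w / (1 + sqrt(1 + 4 w (w - a))) with the principal
   square root. *)
Definition C2 : Cx := Cadd C1 C1.

Definition shear_disc (a : R) (w : Cx) : Cx :=
  Cadd C1 (Cmul (Cmul C2 C2) (Cmul w (Csub w (RtoC a)))).

Definition shear_inv (a : R) (w : Cx) : Cx :=
  Cdiv (Cmul C2 w) (Cadd C1 (csqrt (shear_disc a w))).

(* The points w of the image of E, described through the candidate preimage. *)
Definition shear_dom (a : R) (w : Cx) : Prop :=
  0 < fst (csqrt (shear_disc a w)) /\ inE (shear_inv a w).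

Lemma shear_sum_iff a z w : inE z ->
  shear_sum a z = w <-> Cmul z (Csub C1 (Cmul (RtoC a) z)) = Cmul w (Csub C1 (Cmul z z)).
Proof.
  intro Hz. pose proof (one_sub_sq_nonzero z Hz). unfold shear_sum.
  split; intro E; [rewrite <- E | rewrite E]; field; assumption.
Qed.

(* On the image, shear_inv is a right inverse of shear_sum: the quadratic
   relation for z = 2 w / (1 + v) reduces to v^2 = 1 + 4 w (w - a). *)
Lemma shear_inv_solves a w : shear_dom a w -> shear_sum a (shear_inv a w) = w.
Proof.
  intros [Hre Hin]. apply shear_sum_iff; [exact Hin|].
  pose proof (csqrt_sq _ Hre) as Hsq. pose proof (one_add_nonzero _ (Rlt_le _ _ Hre)) as Hv.
  unfold shear_inv in *. set (v := csqrt (shear_disc a w)) in *.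
  set (z := Cdiv (Cmul C2 w) (Cadd C1 v)).
  apply Cx_sub_eq0.
  replace (Csub (Cmul z (Csub C1 (Cmul (RtoC a) z))) (Cmul w (Csub C1 (Cmul z z))))
    with (Cdiv (Cmul w (Csub (shear_disc a w) (Cmul v v))) (Cmul (Cadd C1 v) (Cadd C1 v)))
    by (unfold z, shear_disc, C2; field; exact Hv).
  rewrite Hsq. field. exact Hv.
Qed.

Lemma fst_Cdiv N d : fst (Cdiv N d) = (fst N * fst d + snd N * snd d) / (fst d ^ 2 + snd d ^ 2).
Proof. unfold Cdiv, Cmul, Cinv, Rdiv; cbn [fst snd]; ring. Qed.

(* For z in E and |a| <= 1, (1 - 2 a z + z^2) / (1 - z^2) has positive real part:
   twice the numerator of its real part is
   (1 - |z|^2) ((1 - a) |1 + z|^2 + (1 + a) |1 - z|^2). *)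
Lemma shear_root_re_pos a z : -1 <= a <= 1 -> inE z ->
  0 < fst (Cdiv (Cadd (Csub C1 (Cmul (Cmul C2 (RtoC a)) z)) (Cmul z z)) (Csub C1 (Cmul z z))).
Proof.
  intros Ha Hz. pose proof (one_sub_sq_nonzero z Hz) as Hden.
  pose proof (Cabs_pos _ Hden) as Hpos. pose proof (Cabs_sq (Csub C1 (Cmul z z))) as Hsq.
  rewrite fst_Cdiv. apply Rdiv_lt_0_compat; [|nra].
  apply inE_iff in Hz. destruct z as [p q]. cbn [fst snd] in Hz.
  cbv [C2 C1 Cadd Csub Copp Cmul RtoC fst snd].
  assert (Hfac : 0 < (1 - a) * ((1 + p) ^ 2 + q ^ 2) + (1 + a) * ((1 - p) ^ 2 + q ^ 2)).
  { assert (0 < (1 + p) ^ 2 + q ^ 2) by nra. assert (0 < (1 - p) ^ 2 + q ^ 2) by nra.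
    destruct (Rle_dec a 0).
    - assert (0 < (1 - a) * ((1 + p) ^ 2 + q ^ 2)) by (apply Rmult_lt_0_compat; lra).
      assert (0 <= (1 + a) * ((1 - p) ^ 2 + q ^ 2)) by (apply Rmult_le_pos; lra). lra.
    - assert (0 <= (1 - a) * ((1 + p) ^ 2 + q ^ 2)) by (apply Rmult_le_pos; lra).
      assert (0 < (1 + a) * ((1 - p) ^ 2 + q ^ 2)) by (apply Rmult_lt_0_compat; lra). lra. }
  match goal with |- 0 < ?G => replace G with
    ((1 - p ^ 2 - q ^ 2) * ((1 - a) * ((1 + p) ^ 2 + q ^ 2) + (1 + a) * ((1 - p) ^ 2 + q ^ 2)) / 2)
    by field end.
  apply Rdiv_lt_0_compat; [apply Rmult_lt_0_compat|]; lra.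
Qed.

(* Every z in E is recovered by shear_inv from its image; along the way the
   principal root of the discriminant is identified as u = 1 + 2 (w - a) z. *)
Lemma shear_inv_spec a z : -1 <= a <= 1 -> inE z ->
  shear_dom a (shear_sum a z) /\ shear_inv a (shear_sum a z) = z.
Proof.
  intros Ha Hz. pose proof (one_sub_sq_nonzero z Hz) as Hden.
  set (w := shear_sum a z).
  set (rel := Csub (Cmul z (Csub C1 (Cmul (RtoC a) z))) (Cmul w (Csub C1 (Cmul z z)))).
  assert (Hrel : rel = C0) by (unfold rel; rewrite (proj1 (shear_sum_iff a z w Hz) eq_refl); ring).
  set (u := Cadd C1 (Cmul (Cmul C2 (Csub w (RtoC a))) z)).
  assert (Hsq : Cmul u u = shear_disc a w).
  { apply Cx_sub_eq0. transitivity (Cmul (Cmul (Cmul C2 C2) (Csub w (RtoC a))) rel);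
      [unfold u, shear_disc, rel, C2; ring | rewrite Hrel; ring]. }
  assert (Hquot : u = Cdiv (Cadd (Csub C1 (Cmul (Cmul C2 (RtoC a)) z)) (Cmul z z))
                           (Csub C1 (Cmul z z))).
  { apply Cx_sub_eq0. transitivity (Cdiv (Cmul (Cmul C2 z) (Copp rel)) (Csub C1 (Cmul z z)));
      [unfold u, rel, C2; field; exact Hden | rewrite Hrel; field; exact Hden]. }
  assert (Hre : 0 < fst u) by (rewrite Hquot; apply shear_root_re_pos; assumption).
  assert (Hroot : csqrt (shear_disc a w) = u) by (apply csqrt_unique; assumption).
  assert (Hinv : shear_inv a w = z).
  { pose proof (one_add_nonzero u (Rlt_le _ _ Hre)) as Hu.
    unfold shear_inv. rewrite Hroot. apply Cx_sub_eq0.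
    transitivity (Cdiv (Cmul C2 (Copp rel)) (Cadd C1 u));
      [unfold u, rel, C2; field; exact Hu | rewrite Hrel; field; exact Hu]. }
  split; [split; [rewrite Hroot; exact Hre | rewrite Hinv; exact Hz] | exact Hinv].
Qed.

(* Fix Re w = x; the real part of the principal
   root, as a function of y = Im w, decreases in |y|, and membership of (x, y) in
   the image is a monotone condition on it; hence each slice is an interval. *)
Definition slice_root (a x y : R) : R := fst (csqrt (shear_disc a (x, y))).

Lemma shear_disc_coords a x y :
  shear_disc a (x, y) = ((2 * x - a) ^ 2 - 4 * y ^ 2 + (1 - a ^ 2), 4 * (2 * x - a) * y).
Proof. apply Cx_eq; cbv [shear_disc C2 C1 Cadd Csub Copp Cmul RtoC fst snd]; ring. Qed.

Lemma csqrt_im_sq D : 0 < fst (csqrt D) -> snd (csqrt D) ^ 2 = fst (csqrt D) ^ 2 - fst D.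
Proof.
  intro Hpos. pose proof (f_equal fst (csqrt_sq D Hpos)) as E.
  unfold Cmul in E; cbn [fst snd] in E. rewrite <- E. ring.
Qed.

Lemma shear_dom_iff a x y : shear_dom a (x, y) <->
  0 < slice_root a x y /\ 2 * x * (2 * x - a) < slice_root a x y ^ 2 + slice_root a x y.
Proof.
  unfold shear_dom, slice_root, inE, shear_inv.
  set (v := csqrt (shear_disc a (x, y))).
  assert (Hequiv : 0 < fst v ->
    (Cabs (Cdiv (Cmul C2 (x, y)) (Cadd C1 v)) < 1 <-> 2 * x * (2 * x - a) < fst v ^ 2 + fst v)).
  { intro Hpos. rewrite (Cabs_div_lt1_iff _ _ (one_add_nonzero v (Rlt_le _ _ Hpos))), Cabs_lt_iff.
    pose proof (csqrt_im_sq _ Hpos) as Him. fold v in Him. rewrite shear_disc_coords in Him.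
    cbv [C2 C1 Cadd Cmul fst snd] in Him |- *. split; intro H; nra. }
  split; intros [Hpos H]; split; try exact Hpos; apply Hequiv; assumption.
Qed.

Lemma sqrt_sq_add_sub_antitone K u u' : 0 <= K -> u <= u' ->
  sqrt (u' ^ 2 + K) - u' <= sqrt (u ^ 2 + K) - u.
Proof.
  intros HK Hu. set (r := sqrt (u ^ 2 + K)).
  assert (Hr : r ^ 2 = u ^ 2 + K) by (apply pow2_sqrt; nra).
  assert (Hr0 : 0 <= r) by apply sqrt_pos.
  assert (Hru : u <= r) by nra.
  assert (H : sqrt (u' ^ 2 + K) <= r + (u' - u)).
  { rewrite <- (sqrt_pow2 (r + (u' - u))) by lra. apply sqrt_le_1_alt. nra. }
  lra.
Qed.

(* With X = 2x - a, c = 1 - a^2 and u = 4 y^2 + X^2 - c, the discriminant D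
   satisfies |D| + Re D = (sqrt (u^2 + 4 X^2 c) - u) + 2 X^2, and u grows with y^2. *)
Lemma slice_root_antitone a x y y' : -1 <= a <= 1 -> y ^ 2 <= y' ^ 2 ->
  slice_root a x y' <= slice_root a x y.
Proof.
  intros Ha Hy. unfold slice_root, csqrt. cbn [fst]. apply sqrt_le_1_alt.
  unfold Cabs. rewrite !shear_disc_coords. cbn [fst snd].
  set (X := 2 * x - a). set (c := 1 - a ^ 2).
  assert (Hmod : forall t, (X ^ 2 - 4 * t ^ 2 + c) ^ 2 + (4 * X * t) ^ 2
                           = (4 * t ^ 2 + X ^ 2 - c) ^ 2 + 4 * X ^ 2 * c)
    by (intro t; ring).
  rewrite !Hmod.
  assert (0 <= 4 * X ^ 2 * c) by (apply Rmult_le_pos; [nra | unfold c; nra]).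
  replace (X ^ 2 - 4 * y ^ 2 + c) with (2 * X ^ 2 - (4 * y ^ 2 + X ^ 2 - c)) by ring.
  replace (X ^ 2 - 4 * y' ^ 2 + c) with (2 * X ^ 2 - (4 * y' ^ 2 + X ^ 2 - c)) by ring.
  assert (Hle : sqrt ((4 * y' ^ 2 + X ^ 2 - c) ^ 2 + 4 * X ^ 2 * c) - (4 * y' ^ 2 + X ^ 2 - c)
             <= sqrt ((4 * y ^ 2 + X ^ 2 - c) ^ 2 + 4 * X ^ 2 * c) - (4 * y ^ 2 + X ^ 2 - c))
    by (apply sqrt_sq_add_sub_antitone; lra).
  lra.
Qed.

Lemma shear_dom_vertical a x y1 y2 y : -1 <= a <= 1 ->
  shear_dom a (x, y1) -> shear_dom a (x, y2) -> y1 <= y <= y2 -> shear_dom a (x, y).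
Proof.
  intros Ha H1 H2 Hy. rewrite shear_dom_iff in H1, H2 |- *.
  assert (Hfar : exists yj, (0 < slice_root a x yj /\
      2 * x * (2 * x - a) < slice_root a x yj ^ 2 + slice_root a x yj) /\ y ^ 2 <= yj ^ 2).
  { destruct (Rle_dec 0 y); [exists y2 | exists y1]; split; (assumption || nra). }
  destruct Hfar as [yj [[Hpos Hlt] Hyj]].
  pose proof (slice_root_antitone a x y yj Ha Hyj). split; nra.
Qed.

Definition curve_cont (p : R -> Cx) (y0 : R) : Prop :=
  forall e, 0 < e -> exists d, 0 < d /\
    forall y, Rabs (y - y0) < d -> Cabs (Csub (p y) (p y0)) < e.

Lemma ex_derive_cont (f : R -> R) y0 : ex_derive f y0 ->
  forall e, 0 < e -> exists d, 0 < d /\ forall y, Rabs (y - y0) < d -> Rabs (f y - f y0) < e.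
Proof.
  intros Hd e He. apply ex_derive_continuous, continuity_pt_filterlim in Hd.
  destruct (Hd e He) as [d [Hd0 Hclose]]. exists d; split; [exact Hd0|].
  intros y Hy. destruct (Req_dec y y0) as [-> | Hne].
  - unfold Rminus; rewrite Rplus_opp_r, Rabs_R0; exact He.
  - apply (Hclose y). split; [split; [exact I | auto] | exact Hy].
Qed.

Lemma slice_root_ex_derive a x y0 : 0 < slice_root a x y0 -> ex_derive (slice_root a x) y0.
Proof.
  intro Hpos.
  assert (Hsq := csqrt_re_sq (shear_disc a (x, y0))). fold (slice_root a x y0) in Hsq.
  unfold Cabs in Hsq. rewrite shear_disc_coords in Hsq. cbn [fst snd] in Hsq.
  apply (ex_derive_ext (fun y => sqrt ((sqrt (((2 * x - a) ^ 2 - 4 * y ^ 2 + (1 - a ^ 2)) ^ 2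
           + (4 * (2 * x - a) * y) ^ 2) + ((2 * x - a) ^ 2 - 4 * y ^ 2 + (1 - a ^ 2))) / 2))).
  { intro y. unfold slice_root, csqrt, Cabs. rewrite shear_disc_coords. reflexivity. }
  set (P := (2 * x - a) ^ 2 - 4 * y0 ^ 2 + (1 - a ^ 2)) in *.
  set (Q := 4 * (2 * x - a) * y0) in *.
  assert (Hmod : 0 < P ^ 2 + Q ^ 2).
  { destruct (Rlt_or_le 0 (P ^ 2 + Q ^ 2)) as [H | H]; [exact H|].
    assert (HP : P = 0) by nra.
    replace (P ^ 2 + Q ^ 2) with 0 in Hsq by nra. rewrite sqrt_0, HP in Hsq. nra. }
  auto_derive. repeat split.
  - replace (P * (P * 1) + Q * (Q * 1)) with (P ^ 2 + Q ^ 2) by ring. exact Hmod.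
  - match goal with |- 0 < (sqrt ?A + ?B) * / 2 =>
      replace A with (P ^ 2 + Q ^ 2) by (unfold P, Q; ring);
      replace B with P by (unfold P; ring) end.
    nra.
Qed.

Lemma shear_inv_slice_cont a x y0 : 0 < slice_root a x y0 ->
  curve_cont (fun y => shear_inv a (x, y)) y0.
Proof.
  intro Hpos. pose proof (slice_root_ex_derive a x y0 Hpos) as Hd.
  assert (Hform : forall y, shear_inv a (x, y) =
    Cdiv (Cmul C2 (x, y))
         (Cadd C1 (slice_root a x y, 4 * (2 * x - a) * y / (2 * slice_root a x y)))).
  { intro y. unfold shear_inv, slice_root, csqrt. rewrite shear_disc_coords. reflexivity. }
  set (q := fun y => Cdiv (Cmul C2 (x, y))
      (Cadd C1 (slice_root a x y, 4 * (2 * x - a) * y / (2 * slice_root a x y)))).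
  assert (Hq : ex_derive (fun y => fst (q y)) y0 /\ ex_derive (fun y => snd (q y)) y0).
  { unfold q; cbv [Cdiv Cmul Cinv Cadd C2 C1 fst snd].
    split; auto_derive; repeat split; try exact Hd; try lra;
      (apply Rgt_not_eq, Rplus_lt_le_0_compat;
       [apply Rmult_lt_0_compat; lra | rewrite Rmult_1_r; apply Rle_0_sqr]). }
  intros e He.
  destruct (ex_derive_cont _ _ (proj1 Hq) (e / 2)) as [d1 [Hd1 H1]]; [lra|].
  destruct (ex_derive_cont _ _ (proj2 Hq) (e / 2)) as [d2 [Hd2 H2]]; [lra|].
  exists (Rmin d1 d2); split; [apply Rmin_glb_lt; assumption|]. intros y Hy.
  specialize (H1 y (Rlt_le_trans _ _ _ Hy (Rmin_l _ _))).
  specialize (H2 y (Rlt_le_trans _ _ _ Hy (Rmin_r _ _))).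
  rewrite !Hform. fold (q y) (q y0).
  eapply Rle_lt_trans; [apply Cabs_le_coords|].
  change (Rabs (fst (q y) - fst (q y0)) + Rabs (snd (q y) - snd (q y0)) < e). lra.
Qed.

Lemma shear_dom_slice_open a x y0 : shear_dom a (x, y0) ->
  exists d, 0 < d /\ forall y, Rabs (y - y0) < d -> shear_dom a (x, y).
Proof.
  intros [Hpos Hin]. fold (slice_root a x y0) in Hpos. unfold inE in Hin.
  destruct (ex_derive_cont _ _ (slice_root_ex_derive a x y0 Hpos) (slice_root a x y0) Hpos)
    as [d1 [Hd1 H1]].
  destruct (shear_inv_slice_cont a x y0 Hpos (1 - Cabs (shear_inv a (x, y0)))) as [d2 [Hd2 H2]];
    [lra|].
  exists (Rmin d1 d2); split; [apply Rmin_glb_lt; assumption|]. intros y Hy. split.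
  - specialize (H1 y (Rlt_le_trans _ _ _ Hy (Rmin_l _ _))).
    fold (slice_root a x y). pose proof (Rle_abs (- (slice_root a x y - slice_root a x y0))).
    rewrite Rabs_Ropp in *. lra.
  - specialize (H2 y (Rlt_le_trans _ _ _ Hy (Rmin_r _ _))). cbv beta in H2.
    unfold inE. replace (shear_inv a (x, y)) with
      (Cadd (shear_inv a (x, y0)) (Csub (shear_inv a (x, y)) (shear_inv a (x, y0)))) by ring.
    eapply Rle_lt_trans; [apply Cabs_triangle | lra].
Qed.

Definition has_curve_deriv (p : R -> Cx) (y0 : R) (c : Cx) : Prop :=
  forall eps, 0 < eps -> exists delta, 0 < delta /\
    forall k, Rabs k < delta ->
      Cabs (Csub (Csub (p (y0 + k)) (p y0)) (Cmul (RtoC k) c)) <= eps * Rabs k.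

Lemma curve_deriv_snd p y0 c :
  has_curve_deriv p y0 c -> derivable_pt_lim (fun y => snd (p y)) y0 (snd c).
Proof.
  intros Hp eps Heps. destruct (Hp (eps / 2)) as [delta [Hdelta Hk]]; [lra|].
  exists (mkposreal delta Hdelta). intros k Hk0 Hkd. cbn in Hkd.
  specialize (Hk k Hkd).
  assert (Hsnd : Rabs (snd (p (y0 + k)) - snd (p y0) - k * snd c) <= eps / 2 * Rabs k).
  { eapply Rle_trans; [|exact Hk].
    replace (snd (p (y0 + k)) - snd (p y0) - k * snd c)
      with (snd (Csub (Csub (p (y0 + k)) (p y0)) (Cmul (RtoC k) c)))
      by (unfold Csub, Cadd, Copp, Cmul, RtoC; cbn [fst snd]; ring).
    apply Cabs_ge_snd. }
  assert (Hkpos : 0 < Rabs k) by (apply Rabs_pos_lt; exact Hk0).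
  replace ((snd (p (y0 + k)) - snd (p y0)) / k - snd c)
    with ((snd (p (y0 + k)) - snd (p y0) - k * snd c) / k) by (field; exact Hk0).
  unfold Rdiv. rewrite Rabs_mult, Rabs_inv.
  apply (Rmult_lt_reg_r (Rabs k)); [exact Hkpos|].
  rewrite Rmult_assoc, Rinv_l, Rmult_1_r by lra. nra.
Qed.

(* A continuous curve p along which F runs up the vertical line Re = x with unit
   speed has velocity i / F'(p y0): differentiate F (p y) = x + i y. *)
Lemma curve_deriv_inverse (F : Cx -> Cx) (p : R -> Cx) x y0 d0 S :
  has_cderiv F (p y0) S -> S <> C0 -> 0 < d0 ->
  (forall y, Rabs (y - y0) < d0 -> F (p y) = (x, y)) -> curve_cont p y0 ->
  has_curve_deriv p y0 (Cdiv (0, 1) S).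
Proof.
  intros HF HS Hd0 Hline Hcont eps Heps.
  set (s := Cabs S). assert (Hs : 0 < s) by (apply Cabs_pos; exact HS).
  set (e1 := Rmin (s / 2) (eps * s ^ 2 / 2)).
  assert (He1 : 0 < e1).
  { apply Rmin_glb_lt; [lra|].
    apply Rdiv_lt_0_compat; [apply Rmult_lt_0_compat; [lra | apply pow_lt; lra] | lra]. }
  destruct (HF e1 He1) as [d1 [Hd1 HFd]].
  destruct (Hcont d1 Hd1) as [dc [Hdc Hpc]].
  exists (Rmin d0 dc); split; [apply Rmin_glb_lt; assumption|]. intros k Hk.
  assert (Hk' : forall y, y = y0 + k -> Rabs (y - y0) < Rmin d0 dc)
    by (intros y ->; replace (y0 + k - y0) with k by ring; exact Hk).
  set (d := Csub (p (y0 + k)) (p y0)).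
  assert (Hdsmall : Cabs d < d1) by (apply Hpc, (Rlt_le_trans _ _ _ (Hk' _ eq_refl)), Rmin_r).
  set (T := Csub (Cmul (RtoC k) (0, 1)) (Cmul S d)).
  assert (HT : Cabs T <= e1 * Cabs d).
  { specialize (HFd _ Hdsmall).
    rewrite (Hline (y0 + k)), (Hline y0) in HFd;
      [| unfold Rminus; rewrite Rplus_opp_r, Rabs_R0; lra
       | apply (Rlt_le_trans _ _ _ (Hk' _ eq_refl)), Rmin_l].
    replace (Csub (Csub (x, y0 + k) (x, y0)) (Cmul S (Csub (p (y0 + k)) (p y0)))) with T in HFd
      by (unfold T, d; apply Cx_eq; cbv [Csub Cadd Copp Cmul RtoC fst snd]; ring).
    exact HFd. }
  assert (Hdk : Cabs d * s <= 2 * Rabs k).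
  { assert (E : Cmul S d = Cadd (Cmul (RtoC k) (0, 1)) (Copp T)) by (unfold T; ring).
    pose proof (Cabs_triangle (Cmul (RtoC k) (0, 1)) (Copp T)) as Htri.
    rewrite <- E, Cabs_opp, !Cabs_mul, Cabs_RtoC, Cabs_imag, Rabs_R1 in Htri. fold s in Htri.
    pose proof (Rmin_l (s / 2) (eps * s ^ 2 / 2)). fold e1 in H.
    pose proof (Cabs_ge0 d). nra. }
  assert (Herr : Cabs (Csub d (Cmul (RtoC k) (Cdiv (0, 1) S))) * s = Cabs T).
  { unfold s. rewrite <- Cabs_mul, <- (Cabs_opp T). f_equal. unfold T, d. field. exact HS. }
  pose proof (Rmin_r (s / 2) (eps * s ^ 2 / 2)) as He1b. fold e1 in He1b.
  pose proof (Cabs_ge0 d). pose proof (Rabs_pos k).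
  apply (Rmult_le_reg_r (s * s)); [nra|].
  fold d. nra.
Qed.

Lemma curve_deriv_chain (G : Cx -> Cx) p y0 c G' :
  has_curve_deriv p y0 c -> has_cderiv G (p y0) G' ->
  has_curve_deriv (fun y => G (p y)) y0 (Cmul G' c).
Proof.
  intros Hp HG eps Heps.
  set (kc := Cabs c). set (g := Cabs G').
  assert (Hkc : 0 <= kc) by apply Cabs_ge0. assert (Hg : 0 <= g) by apply Cabs_ge0.
  set (e' := Rmin 1 (eps / (2 * (g + 1)))).
  assert (He' : 0 < e') by (apply Rmin_glb_lt; [lra | apply Rdiv_lt_0_compat; lra]).
  destruct (Hp e' He') as [dp [Hdp Hpk]].
  destruct (HG (eps / (2 * (kc + 1)))) as [dG [HdG HGd]]; [apply Rdiv_lt_0_compat; lra|].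
  exists (Rmin dp (dG / (kc + 1))); split.
  { apply Rmin_glb_lt; [exact Hdp | apply Rdiv_lt_0_compat; lra]. }
  intros k Hk. cbv beta.
  set (d := Csub (p (y0 + k)) (p y0)).
  assert (Hpd : Cabs (Csub d (Cmul (RtoC k) c)) <= e' * Rabs k)
    by (apply Hpk, (Rlt_le_trans _ _ _ Hk), Rmin_l).
  assert (Hdk : Cabs d <= (kc + 1) * Rabs k).
  { replace d with (Cadd (Csub d (Cmul (RtoC k) c)) (Cmul (RtoC k) c)) by ring.
    eapply Rle_trans; [apply Cabs_triangle|]. rewrite Cabs_mul, Cabs_RtoC. fold kc.
    pose proof (Rmin_l 1 (eps / (2 * (g + 1)))). fold e' in H. pose proof (Rabs_pos k). nra. }
  assert (HdG' : Cabs d < dG).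
  { assert (Rabs k < dG / (kc + 1)) by (eapply Rlt_le_trans; [exact Hk | apply Rmin_r]).
    apply (Rmult_lt_compat_l (kc + 1)) in H; [|lra].
    replace ((kc + 1) * (dG / (kc + 1))) with dG in H by (field; lra). lra. }
  specialize (HGd _ HdG'). fold d in HGd.
  replace (Csub (Csub (G (p (y0 + k))) (G (p y0))) (Cmul (RtoC k) (Cmul G' c)))
    with (Cadd (Csub (Csub (G (p (y0 + k))) (G (p y0))) (Cmul G' d))
               (Cmul G' (Csub d (Cmul (RtoC k) c)))) by (unfold d; ring).
  eapply Rle_trans; [apply Cabs_triangle|]. rewrite Cabs_mul. fold g.
  assert (H1 : eps / (2 * (kc + 1)) * Cabs d <= eps / 2 * Rabs k).
  { apply Rle_trans with (eps / (2 * (kc + 1)) * ((kc + 1) * Rabs k)).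
    - apply Rmult_le_compat_l; [apply Rlt_le, Rdiv_lt_0_compat; lra | exact Hdk].
    - right. field. lra. }
  assert (H2 : g * Cabs (Csub d (Cmul (RtoC k) c)) <= eps / 2 * Rabs k).
  { apply Rle_trans with (g * (eps / (2 * (g + 1)) * Rabs k)).
    - apply Rmult_le_compat_l; [exact Hg|].
      eapply Rle_trans; [exact Hpd | apply Rmult_le_compat_r; [apply Rabs_pos | apply Rmin_r]].
    - assert (g * (eps / (2 * (g + 1))) <= eps / 2).
      { apply (Rmult_le_reg_r (2 * (g + 1))); [lra|]. field_simplify; [nra | lra]. }
      pose proof (Rabs_pos k). nra. }
  lra.
Qed.

Lemma add_nonzero_of_dominated hp gp : Cabs gp < Cabs hp -> Cadd hp gp <> C0.
Proof.
  intros H E. assert (gp = Copp hp).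
  { replace gp with (Csub (Cadd hp gp) hp) by ring. rewrite E. ring. }
  subst gp. rewrite Cabs_opp in H. lra.
Qed.

(* Im((h' - g') i / (h' + g')) = Re((h' - g') / (h' + g')) = (|h'|^2 - |g'|^2) / |h' + g'|^2:
   along a vertical line the imaginary part of h - g increases when |g'| < |h'|. *)
Lemma shear_slope_pos hp gp : Cabs gp < Cabs hp ->
  0 < snd (Cmul (Csub hp gp) (Cdiv (0, 1) (Cadd hp gp))).
Proof.
  intro H. pose proof (add_nonzero_of_dominated _ _ H) as HS.
  pose proof (Cabs_pos _ HS) as Hpos. pose proof (Cabs_sq (Cadd hp gp)) as Hsq.
  apply Cabs_lt_iff in H.
  destruct hp as [a1 b1], gp as [a2 b2]. cbv [Cadd fst snd] in Hpos, Hsq, H.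
  set (N := (a1 + a2) ^ 2 + (b1 + b2) ^ 2) in *.
  assert (HN : 0 < N) by nra.
  replace (snd (Cmul (Csub (a1, b1) (a2, b2)) (Cdiv (0, 1) (Cadd (a1, b1) (a2, b2)))))
    with ((a1 ^ 2 + b1 ^ 2 - (a2 ^ 2 + b2 ^ 2)) / N)
    by (cbv [Cmul Cdiv Cinv Csub Cadd Copp fst snd]; fold N; field; lra).
  apply Rdiv_lt_0_compat; lra.
Qed.

(* Then Re f = Re (h + g), and on each vertical slice of the
   image of h + g, Im f = Im (h - g) is a strictly increasing continuous function of
   Im (h + g); so f = h + conj g is univalent with vertically convex image. *)
Section Shear.

Variables (a : R) (h g h' g' : Cx -> Cx).
Hypothesis Ha : -1 <= a <= 1.
Hypothesis Hderiv : forall z, inE z -> has_cderiv h z (h' z) /\ has_cderiv g z (g' z).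
Hypothesis Hdil : forall z, inE z -> Cabs (g' z) < Cabs (h' z).
Hypothesis Hsum : forall z, inE z -> Cadd (h z) (g z) = shear_sum a z.

(* Im f at the point of E where h + g = x + i y. *)
Definition slice_height (x y : R) : R :=
  snd (Csub (h (shear_inv a (x, y))) (g (shear_inv a (x, y)))).

Definition slice_slope (x y : R) : R :=
  let z := shear_inv a (x, y) in
  snd (Cmul (Csub (h' z) (g' z)) (Cdiv (0, 1) (Cadd (h' z) (g' z)))).

(* Im f along the slice has derivative Re((h' - g') / (h' + g')): the chain rule
   through the curve y |-> shear_inv a (x, y), on which h + g = x + i y. *)
Lemma slice_height_deriv x y0 : shear_dom a (x, y0) ->
  derivable_pt_lim (slice_height x) y0 (slice_slope x y0).
Proof.
  intro Hdom. destruct (shear_dom_slice_open a x y0 Hdom) as [d0 [Hd0 Hnear]].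
  pose proof Hdom as [Hroot Hin].
  destruct (Hderiv _ Hin) as [Dh Dg].
  apply (curve_deriv_snd (fun y => Csub (h (shear_inv a (x, y))) (g (shear_inv a (x, y))))).
  apply (curve_deriv_chain (fun w => Csub (h w) (g w))).
  - apply (curve_deriv_inverse (fun w => Cadd (h w) (g w)) _ x y0 d0).
    + apply cderiv_add; assumption.
    + apply add_nonzero_of_dominated, Hdil, Hin.
    + exact Hd0.
    + intros y Hy. pose proof (Hnear y Hy) as Hdy.
      rewrite Hsum by (destruct Hdy; assumption). apply shear_inv_solves, Hdy.
    + apply shear_inv_slice_cont, Hroot.
  - apply (cderiv_add h (fun w => Copp (g w))); [exact Dh | apply cderiv_opp, Dg].
Qed.

Lemma slice_height_increasing x y1 y2 :
  shear_dom a (x, y1) -> shear_dom a (x, y2) -> y1 < y2 -> slice_height x y1 < slice_height x y2.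
Proof.
  intros H1 H2 Hy.
  assert (Hbetween : forall y, y1 <= y <= y2 -> shear_dom a (x, y))
    by (intros y Hy'; exact (shear_dom_vertical a x y1 y2 y Ha H1 H2 Hy')).
  destruct (MVT_cor2 (slice_height x) (slice_slope x) y1 y2 Hy) as [c [Ec Hc]].
  { intros c Hc. apply slice_height_deriv, Hbetween, Hc. }
  destruct (Hbetween c ltac:(lra)) as [_ Hin].
  pose proof (shear_slope_pos _ _ (Hdil _ Hin)). fold (slice_slope x c) in H. nra.
Qed.

Lemma slice_height_ivt x y1 y2 Y :
  shear_dom a (x, y1) -> shear_dom a (x, y2) -> y1 < y2 ->
  slice_height x y1 <= Y <= slice_height x y2 ->
  exists y, y1 <= y <= y2 /\ slice_height x y = Y.
Proof.
  intros H1 H2 Hy HY.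
  destruct (Req_dec Y (slice_height x y1)) as [-> | N1]; [exists y1; split; [lra | reflexivity]|].
  destruct (Req_dec Y (slice_height x y2)) as [-> | N2]; [exists y2; split; [lra | reflexivity]|].
  assert (Hcont : forall y, y1 <= y <= y2 -> continuity_pt (fun t => slice_height x t - Y) y).
  { intros y Hy'. apply continuity_pt_minus; [| apply continuity_pt_const; intros u v; reflexivity].
    apply derivable_continuous_pt. exists (slice_slope x y).
    apply slice_height_deriv, (shear_dom_vertical a x y1 y2 y Ha H1 H2 Hy'). }
  destruct (Ranalysis5.IVT_interv (fun t => slice_height x t - Y) y1 y2 Hcont Hy) as [y [Hy' HYy]];
    [lra | lra |].
  exists y. split; [exact Hy' | lra].
Qed.

Lemma harm_fst z : inE z -> fst (harm h g z) = fst (shear_sum a z).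
Proof. intro Hz. rewrite <- Hsum by exact Hz. unfold harm, Cadd, Cconj; cbn [fst]. reflexivity. Qed.

Lemma harm_snd_on_slice x y : snd (harm h g (shear_inv a (x, y))) = slice_height x y.
Proof. unfold harm, slice_height, Cadd, Csub, Cconj, Copp; cbn [snd]. reflexivity. Qed.

Lemma slice_point z : inE z ->
  let w := shear_sum a z in shear_dom a (fst w, snd w) /\ shear_inv a (fst w, snd w) = z.
Proof. intro Hz. cbv zeta. rewrite <- surjective_pairing. apply shear_inv_spec; assumption. Qed.

Lemma shear_univalent z w : inE z -> inE w -> harm h g z = harm h g w -> z = w.
Proof.
  intros Hz Hw E.
  destruct (slice_point z Hz) as [Dz Iz]. destruct (slice_point w Hw) as [Dw Iw].
  assert (Ex : fst (shear_sum a z) = fst (shear_sum a w)) by (rewrite <- !harm_fst, E; auto).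
  rewrite Ex in Dz, Iz. set (x := fst (shear_sum a w)) in *.
  assert (Eh : slice_height x (snd (shear_sum a z)) = slice_height x (snd (shear_sum a w)))
    by (rewrite <- !harm_snd_on_slice, Iz, Iw, E; reflexivity).
  destruct (Rtotal_order (snd (shear_sum a z)) (snd (shear_sum a w))) as [L | [L | L]].
  - pose proof (slice_height_increasing x _ _ Dz Dw L). lra.
  - rewrite <- Iz, <- Iw, L. reflexivity.
  - pose proof (slice_height_increasing x _ _ Dw Dz L). lra.
Qed.

Lemma shear_convex_imag : convex_imag (imageE (harm h g)).
Proof.
  intros x Y1 Y2 Y HY [z1 [Hz1 E1]] [z2 [Hz2 E2]].
  destruct (slice_point z1 Hz1) as [D1 I1]. destruct (slice_point z2 Hz2) as [D2 I2].
  assert (X1 : fst (shear_sum a z1) = x) by (rewrite <- harm_fst, E1; auto).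
  assert (X2 : fst (shear_sum a z2) = x) by (rewrite <- harm_fst, E2; auto).
  rewrite X1 in D1, I1. rewrite X2 in D2, I2.
  set (y1 := snd (shear_sum a z1)) in *. set (y2 := snd (shear_sum a z2)) in *.
  assert (F1 : slice_height x y1 = Y1) by (rewrite <- harm_snd_on_slice, I1, E1; reflexivity).
  assert (F2 : slice_height x y2 = Y2) by (rewrite <- harm_snd_on_slice, I2, E2; reflexivity).
  destruct (Rtotal_order y1 y2) as [L | [L | L]].
  - destruct (slice_height_ivt x y1 y2 Y D1 D2 L ltac:(lra)) as [y [Hy Hheight]].
    pose proof (shear_dom_vertical a x y1 y2 y Ha D1 D2 Hy) as Dy.
    exists (shear_inv a (x, y)). split; [apply Dy|].
    apply Cx_eq; cbn [fst snd].
    + rewrite harm_fst by apply Dy. rewrite shear_inv_solves by exact Dy. reflexivity.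
    + rewrite harm_snd_on_slice. exact Hheight.
  - rewrite L in F1. assert (Y = Y1) by lra. subst Y. exists z1. split; assumption.
  - pose proof (slice_height_increasing x _ _ D2 D1 L). lra.
Qed.

End Shear.

Lemma cderiv_cmix t u v z du dv :
  has_cderiv u z du -> has_cderiv v z dv ->
  has_cderiv (cmix t u v) z (Cadd (Cmul (RtoC t) du) (Cmul (RtoC (1 - t)) dv)).
Proof.
  intros Hu Hv. unfold cmix.
  apply (cderiv_add (fun w => Cmul (RtoC t) (u w)) (fun w => Cmul (RtoC (1 - t)) (v w)));
    apply cderiv_scal; assumption.
Qed.

(* Conjugation commutes with real scalars, so mixing commutes with h + conj g. *)
Lemma harm_cmix t h1 g1 h2 g2 z :
  harm (cmix t h1 h2) (cmix t g1 g2) z = cmix t (harm h1 g1) (harm h2 g2) z.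
Proof. apply Cx_eq; cbv [harm cmix Cadd Cmul Cconj RtoC fst snd]; ring. Qed.

Lemma cmix_sum t h1 g1 h2 g2 z :
  Cadd (cmix t h1 h2 z) (cmix t g1 g2 z) =
  cmix t (fun w => Cadd (h1 w) (g1 w)) (fun w => Cadd (h2 w) (g2 w)) z.
Proof. unfold cmix. ring. Qed.

Lemma cmix_eq t u v z c : u z = c -> v z = c -> cmix t u v z = c.
Proof.
  intros Hu Hv. unfold cmix. rewrite Hu, Hv.
  apply Cx_eq; cbv [Cadd Cmul RtoC fst snd]; ring.
Qed.

Lemma same_sum_same_deriv (F1 F2 : Cx -> Cx) d1 d2 z : inE z ->
  (forall w, inE w -> F1 w = F2 w) -> has_cderiv F1 z d1 -> has_cderiv F2 z d2 -> d1 = d2.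
Proof.
  intros Hz Heq H1 H2. apply (cderiv_unique F2 z); [|exact H2].
  apply (cderiv_local F1 F2 z d1 (1 - Cabs z)); [unfold inE in Hz; lra | | exact H1].
  intros w Hw. apply Heq, (inE_open z w Hw).
Qed.

Lemma dilatation_mix t hp1 gp1 hp2 gp2 : 0 <= t <= 1 ->
  Cadd hp1 gp1 = Cadd hp2 gp2 -> Cabs gp1 < Cabs hp1 -> Cabs gp2 < Cabs hp2 ->
  Cabs (Cadd (Cmul (RtoC t) gp1) (Cmul (RtoC (1 - t)) gp2)) <
  Cabs (Cadd (Cmul (RtoC t) hp1) (Cmul (RtoC (1 - t)) hp2)).
Proof.
  intros Ht HS H1 H2. set (S := Cadd hp1 gp1).
  replace gp1 with (Csub S hp1) in H1 |- * by (unfold S; ring).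
  replace gp2 with (Csub S hp2) in H2 |- * by (unfold S; rewrite HS; ring).
  replace (Cadd (Cmul (RtoC t) (Csub S hp1)) (Cmul (RtoC (1 - t)) (Csub S hp2)))
    with (Csub S (Cadd (Cmul (RtoC t) hp1) (Cmul (RtoC (1 - t)) hp2)))
    by (apply Cx_eq; cbv [Csub Cadd Copp Cmul RtoC fst snd]; ring).
  exact (dominated_mix t S hp1 hp2 Ht H1 H2).
Qed.

Theorem theorem2p3 :
  forall (a1 a2 : R) (h1 g1 h2 g2 : Cx -> Cx),
    -1 <= a1 <= 1 -> -1 <= a2 <= 1 ->
    in_SH h1 g1 -> in_SH h2 g2 ->
    (forall z, inE z -> Cadd (h1 z) (g1 z) = shear_sum a1 z) ->
    (forall z, inE z -> Cadd (h2 z) (g2 z) = shear_sum a2 z) ->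
    a1 = a2 ->
    forall t : R, 0 <= t <= 1 ->
      in_SH (cmix t h1 h2) (cmix t g1 g2) /\
      convex_imag (imageE (harm (cmix t h1 h2) (cmix t g1 g2))).
Proof.
  intros a a2 h1 g1 h2 g2 Ha _ [h1' [g1' [D1 [L1 [_ [Z1 N1]]]]]]
    [h2' [g2' [D2 [L2 [_ [Z2 N2]]]]]] S1 S2 <- t Ht.
  set (h' := cmix t h1' h2'). set (g' := cmix t g1' g2').
  assert (Hd : forall z, inE z ->
    has_cderiv (cmix t h1 h2) z (h' z) /\ has_cderiv (cmix t g1 g2) z (g' z)).
  { intros z Hz. destruct (D1 z Hz), (D2 z Hz). split; apply cderiv_cmix; assumption. }
  assert (Hdil : forall z, inE z -> Cabs (g' z) < Cabs (h' z)).
  { intros z Hz. destruct (D1 z Hz), (D2 z Hz), (L1 z Hz), (L2 z Hz).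
    apply dilatation_mix; [exact Ht | | apply Cabs_div_lt1_iff; assumption ..].
    apply (same_sum_same_deriv (fun w => Cadd (h1 w) (g1 w)) (fun w => Cadd (h2 w) (g2 w))
                               _ _ z Hz);
      [intros w Hw; rewrite S1, S2 by exact Hw; reflexivity | apply cderiv_add; assumption ..]. }
  assert (Hsum : forall z, inE z -> Cadd (cmix t h1 h2 z) (cmix t g1 g2 z) = shear_sum a z).
  { intros z Hz. rewrite cmix_sum. apply cmix_eq; [apply S1 | apply S2]; exact Hz. }
  split.
  - exists h', g'. split; [exact Hd|]. split; [|split; [|split]].
    + intros z Hz. pose proof (dominated_nonzero _ _ (Hdil z Hz)) as Hnz.
      split; [exact Hnz | apply Cabs_div_lt1_iff; [exact Hnz | exact (Hdil z Hz)]].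
    + exact (shear_univalent a _ _ h' g' Ha Hd Hdil Hsum).
    + rewrite harm_cmix. apply cmix_eq; assumption.
    + apply cmix_eq; assumption.
  - exact (shear_convex_imag a _ _ h' g' Ha Hd Hdil Hsum).
Qed.
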